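(* Let $n\in\mathbb{Z}\setminus\{0\}$, $r_2\in\mathbb{R}$, $d\in\mathbb{N}$, and let $P\in\mathbb{Z}$ be sufficiently negative (depending on $r_2$). Consider $$S=\sum_{c\in\mathbb{N}} c^{r_2}\sum_{\substack{a,b\in\mathbb{Z}\setminus\{0\}\\ ad-bc=n}} (bc)^{P}.$$ If $d\mid n$, then $$S=(-1)^{P+1}n^{P}\sigma_{r_2}(n)+2\,d^{P}\,\delta_{2\mid P}\,\zeta(-P)\,\zeta(-r_2-P)\prod_{p\mid d}\Big(1+(1-p^{P})\big(p^{r_2}+p^{2r_2}+\cdots+p^{v_p(d)\,r_2}\big)\Big).$$ If $d\nmid n$, then $$S=(-1)^{P+1}n^{P}\sigma_{r_2}(n)+d^{\,r_2+2P}\sum_{\substack{0<c'\le d\\ \gcd(c',d)\mid n}}\frac{\zeta\!\left(-r_2-P,\tfrac{c'}{d}\right)}{\gcd(c',d)^{P}}\sum_{m\in\mathbb{Z}}\big(m+u_{c',d}\big)^{P}.$$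
   Context: For $m\in\mathbb{Z}\setminus\{0\}$ and $\nu\in\mathbb{C}$, $\sigma_\nu(m)=\sum_{e\in\mathbb{N},\,e\mid m}e^{\nu}$. $\zeta$ is the Riemann zeta function and $\zeta(s,a)=\sum_{j\ge0}(j+a)^{-s}$ the Hurwitz zeta function. $\delta_{2\mid P}$ is $1$ if $P$ is even and $0$ otherwise. The product runs over primes $p$ dividing $d$ and $v_p(d)$ is the $p$-adic valuation. For $c,d\in\mathbb{N}$ with $\gcd(c,d)\mid n$: $B=\{b\in\mathbb{Z}:\exists a\in\mathbb{Z},\ ad-bc=n\}$, $b^*$ is an element of $B$ of minimal absolute value, and $u_{c,d}=b^*\gcd(c,d)/d$ (choice of $b^*$ changes $u_{c,d}$ only by an integer, not affecting the sums over $m\in\mathbb{Z}$). *)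

From Stdlib Require Import Reals ZArith ClassicalEpsilon.
From Coquelicot Require Import Coquelicot.
From mathcomp Require Import ssreflect ssrbool ssrnat seq div prime.

Open Scope R_scope.

(* Sum over Z of f (two-sided; used only for absolutely summable f). *)
Definition sumZ (f : Z -> R) : R :=
  Series (fun k => f (Z.of_nat k)) + Series (fun k => f (- Z.of_nat (S k))%Z).

Definition zeta (s : R) : R := Series (fun j => Rpower (INR (S j)) (- s)).

Definition hurwitz_zeta (s a : R) : R := Series (fun j => Rpower (INR j + a) (- s)).

Definition sigma (nu : R) (m : Z) : R :=
  foldr Rplus 0 (map (fun e => Rpower (INR e) nu) (divisors (Z.abs_nat m))).

Definition delta_even (P : Z) : R := if Z.even P then 1 else 0.

Definition inner_sum (n : Z) (d c : nat) (P : Z) : R :=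
  sumZ (fun a => sumZ (fun b =>
    if (a =? 0)%Z || (b =? 0)%Z then 0
    else if (a * Z.of_nat d - b * Z.of_nat c =? n)%Z
         then powerRZ (IZR (b * Z.of_nat c)) P else 0)).

Definition S_sum (n : Z) (r2 : R) (d : nat) (P : Z) : R :=
  Series (fun k => Rpower (INR (S k)) r2 * inner_sum n d (S k) P).

Definition bstar (n : Z) (c d : nat) : Z :=
  epsilon (inhabits 0%Z) (fun b =>
    (exists a : Z, (a * Z.of_nat d - b * Z.of_nat c = n)%Z) /\
    forall b' : Z, (exists a : Z, (a * Z.of_nat d - b' * Z.of_nat c = n)%Z) ->
      (Z.abs b <= Z.abs b')%Z).

Definition u_cd (n : Z) (c d : nat) : R :=
  IZR (bstar n c d) * INR (gcdn c d) / INR d.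

Definition euler_prod (d : nat) (r2 : R) (P : Z) : R :=
  foldr Rmult 1 (map (fun p =>
     1 + (1 - powerRZ (INR p) P) *
         foldr Rplus 0 (map (fun k => Rpower (INR p) (INR k * r2)) (iota 1 (logn p d))))
     (primes d)).

Definition rhs_div (n : Z) (r2 : R) (d : nat) (P : Z) : R :=
  powerRZ (-1) (P + 1) * powerRZ (IZR n) P * sigma r2 n
  + 2 * powerRZ (INR d) P * delta_even P * zeta (IZR (- P)) * zeta (- r2 - IZR P)
      * euler_prod d r2 P.

Definition rhs_ndiv (n : Z) (r2 : R) (d : nat) (P : Z) : R :=
  powerRZ (-1) (P + 1) * powerRZ (IZR n) P * sigma r2 n
  + Rpower (INR d) (r2 + 2 * IZR P) *
    foldr Rplus 0 (map (fun c' =>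
        hurwitz_zeta (- r2 - IZR P) (INR c' / INR d) / powerRZ (INR (gcdn c' d)) P
        * sumZ (fun m => powerRZ (IZR m + u_cd n c' d) P))
      [seq c' <- iota 1 d | gcdn c' d %| Z.abs_nat n]).

(* For fixed [c], the equation [a d - b c = n] determines [b] from [a], and the
   solvable [a] form a coset [a0 + (c / g) Z] with [g = gcd(c, d)].  So the inner
   sum is the lattice sum [(c d / g) ^ P * sum_t (t + b0 g / d) ^ P], minus the
   excluded term [a = 0]; the latter equals [(-n) ^ P] when [c | n] and produces
   the divisor sum [sigma_r2(n)].  If [d | n] one may take [b0 = 0]; what is left,
   [sum_c c ^ (r2 + P) / gcd(c, d) ^ P], is [zeta(-r2-P)] times an Euler product
   over [p | d], found by splitting off the multiples of each [p].  In general
   the summand depends on [c] only through [c mod d], and summing over each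
   residue class gives a Hurwitz zeta value.  Taking [P <= -2] and
   [r2 + P <= -2] makes every series absolutely convergent. *)

From Pilot Require Import Defs.
From Stdlib Require Import Reals ZArith Lia Lra ClassicalEpsilon Classical.
From Coquelicot Require Import Coquelicot.
From mathcomp Require Import ssreflect ssrfun ssrbool eqtype ssrnat seq div prime path.
From mathcomp Require Import zify.
Open Scope R_scope.

Fixpoint psum (u : nat -> R) (N : nat) : R :=
  if N is N'.+1 then psum u N' + u N' else 0.

Lemma psumS_sum_n (u : nat -> R) N : psum u N.+1 = sum_n u N.
Proof.
elim: N => [|N IH]; first by rewrite sum_O /=; lra.
by rewrite sum_Sn -IH.
Qed.

Lemma is_series_psum (u : nat -> R) l : is_series u l <-> is_lim_seq (psum u) l.
Proof.
rewrite (is_lim_seq_incr_1 (psum u) l); split=> lim_u.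
- apply: (is_lim_seq_ext (sum_n u)) => [N|]; [by rewrite psumS_sum_n | exact: lim_u].
- have lim_sum : is_lim_seq (sum_n u) l.
    apply: (is_lim_seq_ext (fun N => psum u N.+1)) => [N|]; [by rewrite psumS_sum_n | exact: lim_u].
  exact: lim_sum.
Qed.

Lemma psumD (u : nat -> R) a b : psum u (a + b) = psum u a + psum (fun i => u (a + i)%N) b.
Proof. by elim: b => [|b IH] /=; rewrite ?addn0 ?addnS /= ?IH; lra. Qed.

Lemma eq_psum (u v : nat -> R) N : (forall i, (i < N)%N -> u i = v i) -> psum u N = psum v N.
Proof.
elim: N => [//|N IH] eq_uv /=.
by rewrite IH ?eq_uv // => i i_lt; apply: eq_uv; lia.
Qed.

Lemma psum_indicator (x : R) (i0 N : nat) :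
  psum (fun i => if i == i0 then x else 0) N = if (i0 < N)%N then x else 0.
Proof.
elim: N => [//|N IH] /=; rewrite IH.
case: (ltngtP i0 N) => [lt|gt|<-].
- by rewrite ltnS ltnW //; lra.
- by rewrite ltnS leqNgt gt /=; lra.
- by rewrite ltnSn; lra.
Qed.

Lemma psum_iota (h : nat -> R) a N :
  psum (fun k => h (a + k)%N) N = foldr Rplus 0 [seq h c | c <- iota a N].
Proof.
elim: N a => [//|N IH] a.
rewrite -add1n psumD /= addn0 add0n (eq_psum _ (fun k => h (a.+1 + k)%N)) ?IH; first lra.
by move=> i _; rewrite addnA addn1.
Qed.

Lemma is_series_finite_support (u : nat -> R) N :
  (forall k, (N <= k)%N -> u k = 0) -> is_series u (psum u N).
Proof.
move=> u0; apply/is_series_psum.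
apply: (is_lim_seq_ext_loc (fun _ => psum u N)); last exact: is_lim_seq_const.
exists N => M; elim: M => [|M IH] NM; first by have -> : N = 0%N by lia.
have [->|neq] := eqVneq N M.+1; first by [].
by rewrite /= -IH ?u0; [lra | lia | lia].
Qed.

Lemma is_series_indicator (x : R) (k0 : nat) : is_series (fun k => if k == k0 then x else 0) x.
Proof.
have := is_series_finite_support (fun k => if k == k0 then x else 0) k0.+1.
rewrite psum_indicator ltnSn; apply=> k k_gt.
by rewrite (gtn_eqF k_gt).
Qed.

Lemma Series_zero : Series (fun _ => 0) = 0.
Proof. exact: is_series_unique (is_series_finite_support _ 0 (fun _ _ => erefl)). Qed.

Lemma ex_series_Rabs_le (u w : nat -> R) :
  (forall k, Rabs (u k) <= w k) -> ex_series w -> ex_series (fun k => Rabs (u k)).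
Proof.
move=> le_uw; apply: (@ex_series_le R_AbsRing R_CompleteNormedModule) => k.
by rewrite /norm /= /abs /= Rabs_Rabsolu.
Qed.

Lemma is_series_foldr (l : seq nat) (h : nat -> nat -> R) :
  (forall c, c \in l -> ex_series (h c)) ->
  is_series (fun k => foldr Rplus 0 [seq h c k | c <- l])
            (foldr Rplus 0 [seq Series (h c) | c <- l]).
Proof.
elim: l => [_|c l IH] /=; first exact: (is_series_finite_support _ 0).
move=> h_ex; apply: is_series_plus.
- by apply/Series_correct/h_ex; rewrite mem_head.
- by apply: IH => c' c'_in; apply: h_ex; rewrite in_cons c'_in orbT.
Qed.

Section Sparse.
Variables (u v : nat -> R) (M i0 : nat).
Hypothesis i0_lt : (i0 < M)%N.
Hypothesis u_sparse :
  forall N i, (i < M)%N -> u (M * N + i)%N = if i == i0 then v N else 0.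

Lemma psum_sparse N : psum u (M * N) = psum v N.
Proof.
elim: N => [|N IH]; first by rewrite muln0.
rewrite mulnS addnC psumD IH /=.
rewrite (eq_psum (fun i => u (M * N + i)%N) (fun i => if i == i0 then v N else 0)) => [|i i_lt].
  by rewrite psum_indicator i0_lt.
by rewrite u_sparse.
Qed.

Lemma is_series_sparse : ex_series u -> is_series v (Series u).
Proof.
move/Series_correct/is_series_psum => lim_u; apply/is_series_psum.
apply: (is_lim_seq_ext (fun N => psum u (M * N)%N)); first exact: psum_sparse.
apply: (is_lim_seq_subseq (psum u) _ (fun N => M * N)%N) lim_u.
move=> Q [N0 Q_after]; exists N0 => N N_ge; apply: Q_after; nia.
Qed.

Lemma Series_sparse : ex_series u -> Series u = Series v.
Proof. by move=> u_ex; rewrite (is_series_unique _ _ (is_series_sparse u_ex)). Qed.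

End Sparse.

Lemma Series_split_multiples (w : nat -> R) (p : nat) : (0 < p)%N ->
  ex_series (fun k => Rabs (w k.+1)) ->
  Series (fun k => w k.+1) =
  Series (fun k => if (p %| k.+1)%N then 0 else w k.+1) + Series (fun j => w (p * j.+1)%N).
Proof.
move=> p_gt0 w_abs.
have restrict (b : nat -> bool) : ex_series (fun k => Rabs (if b k then w k.+1 else 0)).
  apply: (ex_series_Rabs_le _ _ _ w_abs) => k.
  by case: (b k); rewrite ?Rabs_R0 ?Rabs_Rabsolu; [lra | apply: Rabs_pos].
have multiples_sparse N i : (i < p)%N ->
    (if (p %| (p * N + i).+1)%N then w (p * N + i).+1 else 0) =
    (if i == p.-1 then w (p * N.+1)%N else 0).
  move=> i_lt; rewrite -addnS dvdn_addr ?dvdn_mulr //.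
  case: eqP => [->|i_ne]; first by rewrite prednK // dvdnn mulnS addnC.
  by case: ifP => // /(dvdn_leq (ltn0Sn i)); lia.
rewrite -(Series_sparse (fun k => if (p %| k.+1)%N then w k.+1 else 0)
                        (fun j => w (p * j.+1)%N) p p.-1 _ multiples_sparse);
  [|lia|exact/ex_series_Rabs/restrict].
rewrite -Series_plus; last exact/ex_series_Rabs/restrict.
  by apply: Series_ext => k; case: ifP => _; ring.
apply/ex_series_Rabs/(ex_series_ext _ _ _ (restrict (fun k => ~~ (p %| k.+1)%N))) => k.
by case: (p %| k.+1)%N.
Qed.

Lemma foldr_Rplus_filter (p : pred nat) (F : nat -> R) (l : seq nat) :
  foldr Rplus 0 [seq F c | c <- l & p c] = foldr Rplus 0 [seq if p c then F c else 0 | c <- l].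
Proof. by elim: l => [|c l IH] //=; case: (p c); rewrite /= IH; ring. Qed.

Lemma foldr_Rplus_mull (x : R) (F : nat -> R) (l : seq nat) :
  foldr Rplus 0 [seq x * F c | c <- l] = x * foldr Rplus 0 [seq F c | c <- l].
Proof. by elim: l => [|c l IH] /=; rewrite ?IH; ring. Qed.

Lemma foldr_Rplus_indicator (x : nat) (F : nat -> R) (a len : nat) :
  foldr Rplus 0 [seq if x == c then F c else 0 | c <- iota a len] =
  if (a <= x < a + len)%N then F x else 0.
Proof.
elim: len a => [|len IH] a /=; first by rewrite addn0; case: ifP => //; lia.
rewrite IH; case: eqP => [->|x_ne].
  by rewrite ltnn leqnn addnS ltnS leq_addr /=; ring.
have -> : (a.+1 <= x < a.+1 + len)%N = (a <= x < a + len.+1)%N by lia.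
ring.
Qed.

Lemma INR_gt0 (c : nat) : (0 < c)%N -> 0 < INR c.
Proof. by move=> c_gt0; apply: lt_0_INR; lia. Qed.

Lemma powerRZ_Rabs x P : Rabs (powerRZ x P) = powerRZ (Rabs x) P.
Proof.
case: P => [|p|p] /=; first exact: Rabs_R1.
- by rewrite RPow_abs.
- by rewrite Rabs_inv RPow_abs.
Qed.

(* Rocq's [/ 0 = 0] makes [0 ^ P] vanish for negative [P]. *)
Lemma powerRZ_0_neg P : (P < 0)%Z -> powerRZ 0 P = 0.
Proof. by case: P => [|p|p] //= _; rewrite pow_i ?Rinv_0 //; lia. Qed.

Lemma Rpower_m2 x : 0 < x -> Rpower x (-2) = / (x * x).
Proof.
move=> x_gt0; have -> : -2 = - INR 2 by rewrite /=; ring.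
by rewrite Rpower_Ropp Rpower_pow //= Rmult_1_r.
Qed.

Lemma powerRZ_m1 P : powerRZ (-1) P = if Z.even P then 1 else -1.
Proof.
have pow_m1 m : (-1) ^ m = if Z.even (Z.of_nat m) then 1 else -1.
  elim: m => [//|m IH].
  rewrite -[(-1) ^ m.+1]/(-1 * (-1) ^ m) IH Nat2Z.inj_succ Z.even_succ -Z.negb_even.
  by case: (Z.even _) => /=; ring.
case: P => [|p|p] //; rewrite [LHS]/= pow_m1 positive_nat_Z //.
rewrite -[Z.neg p]/(- Z.pos p)%Z Z.even_opp.
by case: (Z.even _); [exact: Rinv_1 | field].
Qed.

Lemma ex_series_inv_sq : ex_series (fun k => / (INR k.+1 * INR k.+1)).
Proof.
pose b k := / INR k.+1 - / INR k.+2.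
have psum_b N : psum b N = 1 - / INR N.+1.
  elim: N => [|N IH]; first by rewrite /=; lra.
  by rewrite -[psum b N.+1]/(psum b N + b N) IH /b (S_INR N.+1); lra.
have b_1 : is_series b 1.
  apply/is_series_psum/(is_lim_seq_ext (fun N => 1 - / INR N.+1)) => [N|].
    by rewrite psum_b.
  have -> : Finite 1 = Rbar_minus 1 0 by rewrite /Rbar_minus /=; f_equal; lra.
  apply: is_lim_seq_minus'; first exact: is_lim_seq_const.
  apply/(is_lim_seq_incr_1 (fun N => / INR N) 0).
  have -> : Finite 0 = Rbar_inv p_infty by [].
  by apply: is_lim_seq_inv; [exact: is_lim_seq_INR | by []].
apply: (@ex_series_le R_AbsRing R_CompleteNormedModule _ (fun k => 2 * b k)).
  move=> k; change (Rabs (/ (INR k.+1 * INR k.+1)) <= 2 * b k).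
  rewrite /b (S_INR k.+1).
  have k1 : 1 <= INR k.+1 by rewrite S_INR; have := pos_INR k; lra.
  set x := INR k.+1 in k1 *; clearbody x.
  rewrite Rabs_pos_eq; last by apply/Rlt_le/Rinv_0_lt_compat; nra.
  apply: (Rmult_le_reg_r (x * x * (x + 1))); first nra.
  have -> : / (x * x) * (x * x * (x + 1)) = x + 1 by field; lra.
  have -> : 2 * (/ x - / (x + 1)) * (x * x * (x + 1)) = 2 * x by field; lra.
  lra.
by apply: (ex_series_scal_l 2 b); exists 1.
Qed.

Lemma ex_series_Rpower_le_m2 s : s <= -2 -> ex_series (fun k => Rpower (INR k.+1) s).
Proof.
move=> s_le; apply/ex_series_Rabs/(ex_series_Rabs_le _ _ _ ex_series_inv_sq) => k.
have k1 : 1 <= INR k.+1 by rewrite S_INR; have := pos_INR k; lra.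
rewrite Rabs_pos_eq; last exact/Rlt_le/exp_pos.
by rewrite -Rpower_m2; [apply: Rle_Rpower | lra].
Qed.

Lemma ex_series_Rabs_powerRZ_affine al be P : 1 <= al -> (P <= -2)%Z ->
  ex_series (fun k => Rabs (powerRZ (al * INR k + be) P)).
Proof.
move=> al_ge1 P_le.
pose K := Z.to_nat (up (2 * Rabs be + 4)).
have K_ge : 2 * Rabs be + 4 <= INR K.
  have [up_gt _] := archimed (2 * Rabs be + 4); have be_ge0 := Rabs_pos be.
  rewrite /K INR_IZR_INZ Z2Nat.id; first lra.
  by apply: le_IZR; lra.
apply: (proj2 (ex_series_incr_n _ K)).
apply: (ex_series_Rabs_le _ (fun k => 4 * / (INR k.+1 * INR k.+1))); last first.
  exact: (ex_series_scal_l 4 _ ex_series_inv_sq).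
move=> k; rewrite powerRZ_Rabs.
set x := Rabs _.
(* Far enough out, [|al (K + k) + be|] grows at least like [(k + 1) / 2]. *)
have [x_ge_half x_ge1] : (INR k + 1) / 2 <= x /\ 1 <= x.
  have k_ge0 := pos_INR k; have := Rle_abs be; have := Rle_abs (- be).
  rewrite /x plus_INR Rabs_Ropp => nbe_le be_le.
  have grow : al * (INR K + INR k) >= INR K + INR k by nra.
  by rewrite Rabs_pos_eq; lra.
clearbody x.
rewrite powerRZ_Rpower; last lra.
apply: (Rle_trans _ (Rpower x (-2))); first by apply: Rle_Rpower; [lra | apply: IZR_le].
have k_pos : 0 < INR k + 1 by have := pos_INR k; lra.
rewrite Rpower_m2 ?S_INR; last lra.
have -> : 4 * / ((INR k + 1) * (INR k + 1)) = / ((INR k + 1) / 2 * ((INR k + 1) / 2)).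
  by field; lra.
by apply: Rinv_le_contravar; nra.
Qed.

Definition dvdZ (m z : Z) : bool := (z mod m =? 0)%Z.

Lemma dvdZP (m z : Z) : m <> 0%Z -> reflect (m | z)%Z (dvdZ m z).
Proof. by move=> m_neq0; apply: (iffP (Z.eqb_spec _ _)); rewrite Z.mod_divide. Qed.

Lemma Zgcd_gt0_r (c d : Z) : (0 < d)%Z -> (0 < Z.gcd c d)%Z.
Proof. by move=> d_gt0; have := Z.gcd_nonneg c d; have := Z.gcd_eq_0_r c d; lia. Qed.

Lemma Zdivide_mul_r_gcd (c d x : Z) : (0 < d)%Z ->
  (c | x * d)%Z <-> (c / Z.gcd c d | x)%Z.
Proof.
move=> d_gt0; have g_gt0 := Zgcd_gt0_r c d d_gt0.
have c_eq := Znumtheory.Zdivide_Zdiv_eq _ _ g_gt0 (Z.gcd_divide_l c d).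
have d_eq := Znumtheory.Zdivide_Zdiv_eq _ _ g_gt0 (Z.gcd_divide_r c d).
have coprime := Z.gcd_div_gcd c d _ (Z.neq_sym _ _ (Z.lt_neq _ _ g_gt0)) (erefl _).
move: (Z.gcd c d) (c / Z.gcd c d)%Z (d / Z.gcd c d)%Z g_gt0 c_eq d_eq coprime
  => g c1 d1 g_gt0 -> -> coprime; split.
- move=> [k k_eq]; apply: (Z.gauss _ d1) coprime; exists k; nia.
- by move=> [m ->]; exists (m * d1)%Z; ring.
Qed.

Lemma dvdZ_mul_add_gcd (c d x b : Z) : (0 < c)%Z -> (0 < d)%Z ->
  dvdZ c (x * d + b * c) = dvdZ (c / Z.gcd c d) x.
Proof.
move=> c_gt0 d_gt0; have cancel_d := Zdivide_mul_r_gcd c d x d_gt0.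
have c_eq := Znumtheory.Zdivide_Zdiv_eq _ _ (Zgcd_gt0_r c d d_gt0) (Z.gcd_divide_l c d).
apply/(dvdZP c _ ltac:(lia))/(dvdZP (c / Z.gcd c d) x ltac:(nia)).
- move=> dvd; apply/cancel_d.
  by apply: (Z.divide_add_cancel_r _ (b * c)%Z); [exists b | rewrite Z.add_comm].
- by move=> /cancel_d dvd; apply: Z.divide_add_r => //; exists b.
Qed.

Lemma solvable_iff_gcd_divide (c d n : Z) :
  (exists a b, a * d - b * c = n)%Z <-> (Z.gcd c d | n)%Z.
Proof.
split.
- move=> [a [b <-]]; apply: Z.divide_sub_r; apply: Z.divide_mul_r.
    exact: Z.gcd_divide_r.
  exact: Z.gcd_divide_l.
- move=> [q ->]; have [u [v uv]] := Z.gcd_bezout c d _ (erefl _).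
  by exists (v * q)%Z, (- (u * q))%Z; rewrite -uv; ring.
Qed.

Lemma Nat2Z_gcdn (c d : nat) : Z.of_nat (gcdn c d) = Z.gcd (Z.of_nat c) (Z.of_nat d).
Proof. lia. Qed.

Lemma INR_gcdn (c d : nat) : INR (gcdn c d) = IZR (Z.gcd (Z.of_nat c) (Z.of_nat d)).
Proof. by rewrite INR_IZR_INZ Nat2Z_gcdn. Qed.

Lemma dvdn_abs_nat (c : nat) (z : Z) : (c %| Z.abs_nat z)%N <-> (Z.of_nat c | z)%Z.
Proof.
rewrite -Z.divide_abs_r -Nat2Z.inj_abs_nat; move: (Z.abs_nat z) => m.
split=> [/dvdnP [k ->]|[x xE]]; first by exists (Z.of_nat k); lia.
by apply/dvdnP; exists (Z.to_nat x); nia.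
Qed.

Lemma divisors_iota N : (0 < N)%N -> divisors N = [seq c <- iota 1 N | c %| N].
Proof.
move=> N_gt0; apply: (irr_sorted_eq (leT := ltn) ltn_trans ltnn (sorted_divisors_ltn N)).
  by apply: sorted_filter; [exact: ltn_trans | exact: iota_ltn_sorted].
move=> c; rewrite mem_filter mem_iota -dvdn_divisors //.
case: (boolP (c %| N)) => [c_dvd|//]; have := dvdn_leq N_gt0 c_dvd.
by case: c c_dvd => [|c] /=; rewrite ?dvd0n => c_dvd; [move/eqP: c_dvd; lia | lia].
Qed.

Lemma logn_mul_pow_prime q p m v : prime p -> q != p -> (0 < m)%N ->
  logn q (m * p ^ v) = logn q m.
Proof.
move=> p_prime q_neq_p m_gt0.
have [q_prime|q_nprime] := boolP (prime q); last by rewrite /logn (negPf q_nprime).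
rewrite lognM //; last by rewrite expn_gt0 prime_gt0.
rewrite lognX (logn_prime q p_prime).
by rewrite (negPf q_neq_p) muln0 addn0.
Qed.

Lemma primes_mul_pdiv_pow d m : (1 < d)%N -> coprime (pdiv d) m ->
  d = (m * pdiv d ^ logn (pdiv d) d)%N -> primes d = pdiv d :: primes m.
Proof.
move=> d_gt1 pm_coprime d_eq; set p := pdiv d in pm_coprime d_eq *.
have p_prime : prime p := pdiv_prime d_gt1.
have v_gt0 : (0 < logn p d)%N by rewrite logn_gt0 mem_primes p_prime pdiv_dvd; lia.
have m_gt0 : (0 < m)%N by case: m d_eq {pm_coprime} => [|//]; rewrite mul0n; lia.
apply: (irr_sorted_eq (leT := ltn) ltn_trans ltnn (sorted_primes d)).
  rewrite /= (path_sortedE ltn_trans) sorted_primes andbT.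
  apply/allP => q; rewrite mem_primes => /and3P [q_prime _ q_dvd].
  have q_dvd_d : (q %| d)%N by rewrite d_eq dvdn_mulr.
  rewrite ltn_neqAle pdiv_min_dvd ?prime_gt1 // andbT.
  by apply/eqP => p_eq; move: pm_coprime; rewrite prime_coprime // p_eq q_dvd.
move=> q; rewrite in_cons !mem_primes.
case: (boolP (prime q)) => [q_prime|q_nprime] /=; last first.
  by rewrite orbF; case: eqP => // q_eq; move: q_nprime; rewrite q_eq p_prime.
have d_gt0 : (0 < d)%N by lia.
rewrite d_gt0 m_gt0 /= {1}d_eq Euclid_dvdM // Euclid_dvdX //.
by rewrite (dvdn_prime2 q_prime p_prime) v_gt0 andbT orbC.
Qed.

Lemma exists_min_Zabs (Q : Z -> Prop) : (exists b, Q b) ->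
  exists b, Q b /\ forall b', Q b' -> (Z.abs b <= Z.abs b')%Z.
Proof.
move=> [b Qb].
suff min_le N b0 : (Z.abs_nat b0 <= N)%N -> Q b0 ->
    exists b, Q b /\ forall b', Q b' -> (Z.abs b <= Z.abs b')%Z.
  exact: (min_le _ b (leqnn _) Qb).
elim: N b0 => [|N IH] b0 b0_le Qb0.
  by exists b0; split=> // b' _; lia.
case: (classic (forall b', Q b' -> (Z.abs b0 <= Z.abs b')%Z)) => [b0_min|]; first by exists b0.
move=> /not_all_ex_not [b' not_le]; have [Qb' b'_lt] := imply_to_and _ _ not_le.
by apply: (IH b') => //; lia.
Qed.

Lemma bstar_solves (n : Z) (c d : nat) :
  (exists a b, a * Z.of_nat d - b * Z.of_nat c = n)%Z ->
  exists a, (a * Z.of_nat d - bstar n c d * Z.of_nat c = n)%Z.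
Proof.
move=> [a [b sol]].
have := exists_min_Zabs (fun b => exists a, (a * Z.of_nat d - b * Z.of_nat c = n)%Z).
move=> /(_ (ex_intro _ b (ex_intro _ a sol))) /(epsilon_spec (inhabits 0%Z)) [bstar_sol _].
exact: bstar_sol.
Qed.

Definition summableZ (f : Z -> R) : Prop :=
  ex_series (fun k => Rabs (f (Z.of_nat k))) /\
  ex_series (fun k => Rabs (f (- Z.of_nat k.+1)%Z)).

Lemma sumZ_ext (f g : Z -> R) : (forall z, f z = g z) -> sumZ f = sumZ g.
Proof. by move=> fg; rewrite /sumZ; congr (_ + _); apply: Series_ext. Qed.

Lemma summableZ_ext (f g : Z -> R) : (forall z, f z = g z) -> summableZ f <-> summableZ g.
Proof.
move=> fg; rewrite /summableZ.
by split=> -[h1 h2]; split; [move: h1 | move: h2 | move: h1 | move: h2];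
  apply: ex_series_ext => k; rewrite fg.
Qed.

Lemma summableZ_le (f g : Z -> R) :
  (forall z, Rabs (f z) <= Rabs (g z)) -> summableZ g -> summableZ f.
Proof. by move=> fg [g1 g2]; split; [move: g1 | move: g2]; apply: ex_series_Rabs_le. Qed.

Lemma sumZ_minus (f g : Z -> R) : summableZ f -> summableZ g ->
  sumZ (fun z => f z - g z) = sumZ f - sumZ g.
Proof.
move=> [/ex_series_Rabs f1 /ex_series_Rabs f2] [/ex_series_Rabs g1 /ex_series_Rabs g2].
by rewrite /sumZ !Series_minus //; ring.
Qed.

Lemma sumZ_scal (c : R) (f : Z -> R) : sumZ (fun z => c * f z) = c * sumZ f.
Proof. by rewrite /sumZ !Series_scal_l; ring. Qed.

Lemma sumZ_zero : sumZ (fun _ => 0) = 0.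
Proof. by rewrite /sumZ Series_zero; ring. Qed.

Lemma sumZ_indicator (x : R) (z0 : Z) : sumZ (fun z => if (z =? z0)%Z then x else 0) = x.
Proof.
rewrite /sumZ; case: (Z_le_gt_dec 0 z0) => z0_ge0.
- rewrite (Series_ext _ (fun k => if k == Z.to_nat z0 then x else 0)); last first.
    by move=> k; case: Z.eqb_spec => ?; case: eqP => ? //; lia.
  rewrite (Series_ext (fun k => if (- Z.of_nat k.+1 =? z0)%Z then x else 0) (fun _ => 0)).
    by rewrite Series_zero (is_series_unique _ _ (is_series_indicator x _)); ring.
  by move=> k; case: Z.eqb_spec => ? //; lia.
- rewrite (Series_ext _ (fun _ => 0)); last by move=> k; case: Z.eqb_spec => ? //; lia.
  rewrite (Series_ext (fun k => if (- Z.of_nat k.+1 =? z0)%Z then x else 0)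
                      (fun k => if k == Z.to_nat (- z0 - 1) then x else 0)).
    by rewrite Series_zero (is_series_unique _ _ (is_series_indicator x _)); ring.
  by move=> k; case: Z.eqb_spec => ?; case: eqP => ? //; lia.
Qed.

Lemma summableZ_indicator (x : R) (z0 : Z) : summableZ (fun z => if (z =? z0)%Z then x else 0).
Proof.
have ind_Rabs k0 : ex_series (fun k => if k == k0 then Rabs x else 0).
  by eexists; apply: is_series_indicator.
have x_ge0 := Rabs_pos x.
split.
- apply: (ex_series_Rabs_le _ _ _ (ind_Rabs (Z.to_nat z0))) => k.
  by case: Z.eqb_spec => ?; case: eqP => ?; rewrite ?Rabs_R0; lra || lia.
- apply: (ex_series_Rabs_le _ _ _ (ind_Rabs (Z.to_nat (- z0 - 1)))) => k.
  by case: Z.eqb_spec => ?; case: eqP => ?; rewrite ?Rabs_R0; lra || lia.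
Qed.

Lemma summableZ_powerRZ_affine al be P : 1 <= al -> (P <= -2)%Z ->
  summableZ (fun t => powerRZ (al * IZR t + be) P).
Proof.
move=> al_ge1 P_le; split.
- apply: (ex_series_ext (fun k => Rabs (powerRZ (al * INR k + be) P))).
    by move=> k; rewrite INR_IZR_INZ.
  exact: ex_series_Rabs_powerRZ_affine.
- apply: (ex_series_ext (fun k => Rabs (powerRZ (al * INR k + (al - be)) P))).
    move=> k; rewrite !powerRZ_Rabs -Rabs_Ropp opp_IZR -INR_IZR_INZ S_INR.
    by congr (powerRZ (Rabs _) P); ring.
  exact: ex_series_Rabs_powerRZ_affine.
Qed.

Lemma summableZ_shift1 (f : Z -> R) : summableZ (fun z => f (z + 1)%Z) <-> summableZ f.
Proof.
have pos : ex_series (fun k => Rabs (f (Z.of_nat k + 1)%Z)) <->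
            ex_series (fun k => Rabs (f (Z.of_nat k))).
  rewrite (ex_series_incr_1 (fun k => Rabs (f (Z.of_nat k)))).
  by split; apply: ex_series_ext => k; rewrite Nat2Z.inj_succ.
have neg : ex_series (fun k => Rabs (f (- Z.of_nat k.+1 + 1)%Z)) <->
           ex_series (fun k => Rabs (f (- Z.of_nat k.+1)%Z)).
  rewrite (ex_series_incr_1 (fun k => Rabs (f (- Z.of_nat k.+1 + 1)%Z))).
  by split; apply: ex_series_ext => k; congr (Rabs (f _)); lia.
by rewrite /summableZ pos neg.
Qed.

Lemma sumZ_shift1 (f : Z -> R) : summableZ f -> sumZ (fun z => f (z + 1)%Z) = sumZ f.
Proof.
move=> [/ex_series_Rabs f1 /ex_series_Rabs f2]; rewrite /sumZ (Series_incr_1 _ f1).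
rewrite (Series_ext (fun k => f (Z.of_nat k + 1)%Z) (fun k => f (Z.of_nat k.+1))); last first.
  by move=> k; congr f; lia.
rewrite (Series_incr_1 (fun k => f (- Z.of_nat k.+1 + 1)%Z)); last first.
  by apply/ex_series_incr_1; apply: ex_series_ext f2 => k; congr f; lia.
rewrite (Series_ext (fun k => f (- Z.of_nat k.+2 + 1)%Z) (fun k => f (- Z.of_nat k.+1)%Z)).
  by rewrite /=; ring.
by move=> k; congr f; lia.
Qed.

Lemma summableZ_shift_nat (f : Z -> R) (m : nat) :
  summableZ (fun z => f (z + Z.of_nat m)%Z) <-> summableZ f.
Proof.
elim: m f => [|m IH] f.
  by apply: summableZ_ext => z; rewrite Z.add_0_r.
rewrite -(IH f) -(summableZ_shift1 (fun z => f (z + Z.of_nat m)%Z)).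
by apply: summableZ_ext => z; congr f; lia.
Qed.

Lemma summableZ_shift (f : Z -> R) (t : Z) : summableZ (fun z => f (z + t)%Z) <-> summableZ f.
Proof.
case: (Z_le_gt_dec 0 t) => t_sign.
  rewrite -(summableZ_shift_nat f (Z.to_nat t)).
  by apply: summableZ_ext => z; rewrite Z2Nat.id.
rewrite -(summableZ_shift_nat (fun z => f (z + t)%Z) (Z.to_nat (- t))).
by apply: summableZ_ext => z; congr f; lia.
Qed.

Lemma sumZ_shift_nat (f : Z -> R) (m : nat) : summableZ f ->
  sumZ (fun z => f (z + Z.of_nat m)%Z) = sumZ f.
Proof.
elim: m => [|m IH] f_sum.
  by apply: sumZ_ext => z; rewrite Z.add_0_r.
rewrite -IH // -(sumZ_shift1 (fun z => f (z + Z.of_nat m)%Z)); last first.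
  exact/summableZ_shift_nat.
by apply: sumZ_ext => z; congr f; lia.
Qed.

Lemma sumZ_shift (f : Z -> R) (t : Z) : summableZ f -> sumZ (fun z => f (z + t)%Z) = sumZ f.
Proof.
move=> f_sum; case: (Z_le_gt_dec 0 t) => t_sign.
  rewrite -(sumZ_shift_nat f (Z.to_nat t)) //.
  by apply: sumZ_ext => z; rewrite Z2Nat.id.
rewrite -(sumZ_shift_nat (fun z => f (z + t)%Z) (Z.to_nat (- t))); last exact/summableZ_shift.
by apply: sumZ_ext => z; congr f; lia.
Qed.

Lemma sumZ_multiples (f : Z -> R) (M : nat) : (0 < M)%N -> summableZ f ->
  sumZ (fun z => if dvdZ (Z.of_nat M) z then f z else 0) = sumZ (fun t => f (Z.of_nat M * t)%Z).
Proof.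
move=> M_gt0 [f1 f2].
have restrict (u : nat -> R) (b : nat -> bool) : ex_series (fun k => Rabs (u k)) ->
    ex_series (fun k => if b k then u k else 0).
  move=> u_abs; apply/ex_series_Rabs/(ex_series_Rabs_le _ _ _ u_abs) => k.
  by case: (b k); rewrite ?Rabs_R0; [lra | apply: Rabs_pos].
rewrite /sumZ; congr (_ + _).
- apply: (Series_sparse _ _ M 0) => //; last exact: restrict.
  move=> N i lt_iM; rewrite /dvdZ.
  have -> : (Z.of_nat (M * N + i)%N mod Z.of_nat M = Z.of_nat i)%Z.
    by symmetry; apply: (Z.mod_unique_pos _ _ (Z.of_nat N)); lia.
  case: eqP => [->|ne_i0]; last by case: Z.eqb_spec => //; lia.
  by rewrite Z.eqb_refl; congr f; lia.
- apply: (Series_sparse _ _ M M.-1); [lia | | exact: restrict].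
  move=> N i lt_iM; rewrite /dvdZ.
  have -> : ((- Z.of_nat (M * N + i)%N.+1) mod Z.of_nat M = Z.of_nat (M - 1 - i)%N)%Z.
    by symmetry; apply: (Z.mod_unique_pos _ _ (- Z.of_nat N - 1)); lia.
  case: eqP => [->|ne_i]; last by case: Z.eqb_spec => //; lia.
  by rewrite (_ : Z.of_nat _ = 0)%Z ?Z.eqb_refl; [congr f | ]; lia.
Qed.

Lemma sumZ_powerRZ P : (P <= -2)%Z ->
  sumZ (fun t => powerRZ (IZR t) P) = 2 * delta_even P * zeta (IZR (- P)).
Proof.
move=> P_le; rewrite /sumZ /zeta Series_incr_1_aux; last by rewrite /= powerRZ_0_neg //; lia.
have pos k : powerRZ (IZR (Z.of_nat k.+1)) P = Rpower (INR k.+1) (- IZR (- P)).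
  by rewrite -INR_IZR_INZ powerRZ_Rpower ?opp_IZR ?Ropp_involutive //; apply: INR_gt0.
rewrite (Series_ext _ _ pos).
rewrite (Series_ext (fun k => powerRZ (IZR (- Z.of_nat k.+1)) P)
                    (fun k => powerRZ (-1) P * Rpower (INR k.+1) (- IZR (- P)))); last first.
  move=> k; rewrite -pos opp_IZR (_ : - IZR _ = -1 * IZR (Z.of_nat k.+1)); last ring.
  by rewrite powerRZ_mult.
by rewrite Series_scal_l powerRZ_m1 /delta_even; case: (Z.even P); ring.
Qed.

(** * The inner sum *)

(* For fixed [a], [a d - b c = n] has at most one solution [b], namely
   [b c = a d - n].  The term [a = 0], excluded from [inner_sum], is kept. *)
Definition inner_term (n : Z) (d c : nat) (P : Z) (a : Z) : R :=
  if dvdZ (Z.of_nat c) (a * Z.of_nat d - n) then powerRZ (IZR (a * Z.of_nat d - n)) P else 0.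

Lemma inner_sum_row (n : Z) (d c : nat) (P a : Z) : (0 < c)%N -> (P < 0)%Z ->
  sumZ (fun b => if (a =? 0)%Z || (b =? 0)%Z then 0
                 else if (a * Z.of_nat d - b * Z.of_nat c =? n)%Z
                      then powerRZ (IZR (b * Z.of_nat c)) P else 0)
  = if (a =? 0)%Z then 0 else inner_term n d c P a.
Proof.
move=> c_gt0 P_lt0; case: Z.eqb_spec => [_|a_neq0] /=; first exact: sumZ_zero.
rewrite /inner_term; case: dvdZP; [lia | move=> dvd_c | move=> ndvd_c]; last first.
  rewrite -[RHS]sumZ_zero; apply: sumZ_ext => b.
  case: Z.eqb_spec => //= _; case: Z.eqb_spec => // eq_n.
  by case: ndvd_c; exists b; lia.
have [b0 b0_eq] := dvd_c.
rewrite -(sumZ_indicator (powerRZ (IZR (a * Z.of_nat d - n)) P) b0); apply: sumZ_ext => b.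
case: (Z.eqb_spec b 0) => [b_eq0|_] /=;
  case: (Z.eqb_spec (a * Z.of_nat d - b * Z.of_nat c) n) => eq_n;
  case: (Z.eqb_spec b b0) => eq_b //; try nia.
- by rewrite (_ : (a * Z.of_nat d - n = 0)%Z) ?powerRZ_0_neg //; nia.
- by congr (powerRZ (IZR _) P); lia.
Qed.

Lemma summableZ_inner_term (n : Z) (d c : nat) (P : Z) : (0 < d)%N -> (P <= -2)%Z ->
  summableZ (inner_term n d c P).
Proof.
move=> d_gt0 P_le; apply: (summableZ_le _ (fun a => powerRZ (INR d * IZR a + IZR (- n)) P)).
  move=> a; rewrite /inner_term; case: dvdZ; last by rewrite Rabs_R0; apply: Rabs_pos.
  rewrite minus_IZR mult_IZR -INR_IZR_INZ opp_IZR.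
  by apply: Req_le; congr (Rabs (powerRZ _ P)); ring.
by apply: summableZ_powerRZ_affine => //; apply: (le_INR 1 d); lia.
Qed.

Lemma inner_sum_eq (n : Z) (d c : nat) (P : Z) : (0 < c)%N -> (0 < d)%N -> (P <= -2)%Z ->
  inner_sum n d c P = sumZ (inner_term n d c P) - inner_term n d c P 0.
Proof.
move=> c_gt0 d_gt0 P_le; rewrite /inner_sum.
rewrite (sumZ_ext _ (fun a => inner_term n d c P a -
                             if (a =? 0)%Z then inner_term n d c P 0 else 0)).
  rewrite sumZ_minus ?sumZ_indicator //; last exact: summableZ_indicator.
  exact: summableZ_inner_term.
move=> a; rewrite inner_sum_row //; last lia.
by case: Z.eqb_spec => [->|_]; ring.
Qed.

Lemma sumZ_inner_term (n : Z) (d c : nat) (P a0 b0 : Z) :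
  (0 < c)%N -> (0 < d)%N -> (P <= -2)%Z -> (a0 * Z.of_nat d - b0 * Z.of_nat c = n)%Z ->
  sumZ (inner_term n d c P) =
  powerRZ (INR c * INR d / INR (gcdn c d)) P *
  sumZ (fun t => powerRZ (IZR t + IZR b0 * INR (gcdn c d) / INR d) P).
Proof.
move=> c_gt0 d_gt0 P_le sol; rewrite INR_gcdn !INR_IZR_INZ.
set C := Z.of_nat c; set D := Z.of_nat d; set g := Z.gcd C D.
have g_gt0 : (0 < g)%Z by apply: Zgcd_gt0_r; lia.
have c_eq := Znumtheory.Zdivide_Zdiv_eq _ _ g_gt0 (Z.gcd_divide_l C D).
set c1 := (C / g)%Z in c_eq.
have c1_gt0 : (0 < c1)%Z by nia.
pose h x := powerRZ (IZR (x * D + b0 * C)) P.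
have h_sum : summableZ h.
  apply/(summableZ_ext (fun x => powerRZ (INR d * IZR x + IZR (b0 * C)) P)).
    by move=> x; rewrite /h plus_IZR !mult_IZR /D -INR_IZR_INZ; congr powerRZ; ring.
  by apply: summableZ_powerRZ_affine => //; apply: (le_INR 1 d); lia.
rewrite -(sumZ_shift _ a0 (summableZ_inner_term n d c P d_gt0 P_le)).
rewrite (sumZ_ext _ (fun x => if dvdZ (Z.of_nat (Z.to_nat c1)) x then h x else 0)); last first.
  move=> x; rewrite /inner_term /h Z2Nat.id; last lia.
  have -> : ((x + a0) * D - n = x * D + b0 * C)%Z by rewrite -sol /C /D; ring.
  by rewrite dvdZ_mul_add_gcd //; lia.
rewrite sumZ_multiples ?summableZ_shift //; last lia.
rewrite -sumZ_scal; apply: sumZ_ext => t; rewrite /h -powerRZ_mult Z2Nat.id; last lia.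
congr powerRZ; rewrite c_eq !plus_IZR !mult_IZR.
have : IZR g <> 0 by apply: not_0_IZR; lia.
have : IZR D <> 0 by apply: not_0_IZR; lia.
by move=> *; field.
Qed.

Lemma sumZ_inner_term_eq0 (n : Z) (d c : nat) (P : Z) : (0 < c)%N ->
  ~ (Z.gcd (Z.of_nat c) (Z.of_nat d) | n)%Z -> sumZ (inner_term n d c P) = 0.
Proof.
move=> c_gt0 ndvd; rewrite -[RHS]sumZ_zero; apply: sumZ_ext => a.
rewrite /inner_term; case: dvdZP => [|[b b_eq]|//]; first lia.
by case: ndvd; apply/solvable_iff_gcd_divide; exists a, b; lia.
Qed.

Lemma weighted_sumZ_inner_term (n : Z) (d c : nat) (P a0 b0 : Z) (r2 : R) :
  (0 < c)%N -> (0 < d)%N -> (P <= -2)%Z -> (a0 * Z.of_nat d - b0 * Z.of_nat c = n)%Z ->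
  Rpower (INR c) r2 * sumZ (inner_term n d c P) =
  Rpower (INR c) (r2 + IZR P) * (powerRZ (INR d) P / powerRZ (INR (gcdn c d)) P *
    sumZ (fun t => powerRZ (IZR t + IZR b0 * INR (gcdn c d) / INR d) P)).
Proof.
move=> c_gt0 d_gt0 P_le sol; rewrite (sumZ_inner_term n d c P a0 b0) //.
have c_pos : 0 < INR c by exact: INR_gt0.
rewrite /Rdiv !powerRZ_mult powerRZ_inv' Rpower_plus -powerRZ_Rpower //.
ring.
Qed.

Lemma is_series_inner_term0 (n : Z) (d : nat) (P : Z) (r2 : R) : n <> 0%Z -> (P < 0)%Z ->
  is_series (fun k => Rpower (INR k.+1) r2 * inner_term n d k.+1 P 0)
            (powerRZ (IZR (- n)) P * Defs.sigma r2 n).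
Proof.
move=> n_neq0 P_lt0.
have term0 c : (0 < c)%N -> inner_term n d c P 0 =
                             if (c %| Z.abs_nat n)%N then powerRZ (IZR (- n)) P else 0.
  move=> c_gt0; rewrite /inner_term (_ : (0 * _ - n = - n)%Z) //.
  case: dvdZP => [|/Z.divide_opp_r/dvdn_abs_nat ->|ndvd] //; first lia.
  by case: ifP => // /dvdn_abs_nat /Z.divide_opp_r.
have -> : powerRZ (IZR (- n)) P * Defs.sigma r2 n =
          psum (fun k => Rpower (INR k.+1) r2 * inner_term n d k.+1 P 0) (Z.abs_nat n).
  rewrite /Defs.sigma divisors_iota; last lia.
  rewrite foldr_Rplus_filter -foldr_Rplus_mull -psum_iota.
  by apply: eq_psum => k _; rewrite add1n term0 //; case: ifP => _; ring.
apply: is_series_finite_support => k k_ge.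
rewrite term0 //; case: ifP => [k_dvd|_]; last ring.
by have := dvdn_leq (ltac:(lia) : (0 < Z.abs_nat n)%N) k_dvd; lia.
Qed.

Lemma S_sum_eq (n : Z) (r2 : R) (d : nat) (P : Z) : n <> 0%Z -> (0 < d)%N -> (P <= -2)%Z ->
  ex_series (fun k => Rpower (INR k.+1) r2 * sumZ (inner_term n d k.+1 P)) ->
  S_sum n r2 d P = Series (fun k => Rpower (INR k.+1) r2 * sumZ (inner_term n d k.+1 P))
                   + powerRZ (-1) (P + 1) * powerRZ (IZR n) P * Defs.sigma r2 n.
Proof.
move=> n_neq0 d_gt0 P_le ex_main; rewrite /S_sum.
rewrite (Series_ext _ (fun k => Rpower (INR k.+1) r2 * sumZ (inner_term n d k.+1 P)
                                - Rpower (INR k.+1) r2 * inner_term n d k.+1 P 0)); last first.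
  by move=> k; rewrite inner_sum_eq //; ring.
have term0 := is_series_inner_term0 n d P r2 n_neq0 ltac:(lia).
rewrite Series_minus //; last by eexists; exact: term0.
rewrite (is_series_unique _ _ term0).
have -> : powerRZ (IZR (- n)) P = - (powerRZ (-1) (P + 1) * powerRZ (IZR n) P).
  rewrite opp_IZR (_ : - IZR n = -1 * IZR n); last ring.
  by rewrite powerRZ_mult powerRZ_add /=; [ring | lra].
ring.
Qed.

(** * The Euler product *)

Section GcdZeta.
Variables (r2 : R) (P : Z).
Hypothesis P_le : (P <= -2)%Z.
Hypothesis s_le : r2 + IZR P <= -2.

Definition gcd_weight (m c : nat) : R :=
  Rpower (INR c) (r2 + IZR P) / powerRZ (INR (gcdn c m)) P.

Definition gcd_zeta (m : nat) : R := Series (fun k => gcd_weight m k.+1).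

Definition euler_factor (p v : nat) : R :=
  1 + (1 - powerRZ (INR p) P) *
      foldr Rplus 0 [seq Rpower (INR p) (INR k * r2) | k <- iota 1 v].

Lemma ex_series_Rabs_gcd_weight m : (0 < m)%N -> ex_series (fun k => Rabs (gcd_weight m k.+1)).
Proof.
move=> m_gt0.
apply: (ex_series_Rabs_le _ (fun k => Rpower (INR m) (- IZR P) * Rpower (INR k.+1) (r2 + IZR P))).
  move=> k; rewrite /gcd_weight.
  have g_gt0 : (0 < gcdn k.+1 m)%N by rewrite gcdn_gt0 m_gt0 orbT.
  have g_le : (gcdn k.+1 m <= m)%N by apply: dvdn_leq => //; apply: dvdn_gcdr.
  rewrite /Rdiv powerRZ_Rpower; last exact: INR_gt0.
  rewrite -Rpower_Ropp Rabs_pos_eq; last by apply: Rmult_le_pos; apply/Rlt_le/exp_pos.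
  rewrite Rmult_comm; apply: Rmult_le_compat_r; first exact/Rlt_le/exp_pos.
  apply: Rle_Rpower_l; first by have := IZR_le _ _ P_le; lra.
  by split; [apply: INR_gt0 | apply: le_INR; lia].
by apply: ex_series_scal_l; apply: ex_series_Rpower_le_m2.
Qed.

Lemma gcd_weight_pow_ndvd p m v c : prime p -> ~~ (p %| c)%N ->
  gcd_weight (p ^ v * m) c = gcd_weight m c.
Proof.
move=> p_prime p_ndvd; rewrite /gcd_weight Gauss_gcdr //.
by rewrite coprimeXr // coprime_sym prime_coprime.
Qed.

Lemma gcd_weight_mul_coprime p m j : prime p -> coprime p m -> (0 < j)%N ->
  gcd_weight m (p * j) = Rpower (INR p) (r2 + IZR P) * gcd_weight m j.
Proof.
move=> p_prime pm_coprime j_gt0; rewrite /gcd_weight.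
rewrite gcdnC Gauss_gcdr 1?coprime_sym // gcdnC.
rewrite mult_INR -Rpower_mult_distr; last exact: INR_gt0.
  by rewrite /Rdiv; ring.
exact/INR_gt0/prime_gt0.
Qed.

Lemma gcd_weight_mul_powS p m v j : prime p -> (0 < j)%N ->
  gcd_weight (p ^ v.+1 * m) (p * j) = Rpower (INR p) r2 * gcd_weight (p ^ v * m) j.
Proof.
move=> p_prime j_gt0; rewrite /gcd_weight expnS -mulnA -muln_gcdr.
have p_pos : 0 < INR p by apply/INR_gt0/prime_gt0.
have g_pos : 0 < INR (gcdn j (p ^ v * m)) by apply: INR_gt0; rewrite gcdn_gt0 j_gt0.
have j_pos : 0 < INR j by apply: INR_gt0.
rewrite !mult_INR -Rpower_mult_distr //.
rewrite powerRZ_mult /Rdiv Rinv_mult Rpower_plus (powerRZ_Rpower (INR p)) //.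
by field; split; apply: Rgt_not_eq; [apply: powerRZ_lt | apply: exp_pos].
Qed.

Lemma gcd_zeta_coprime p m : prime p -> coprime p m -> (0 < m)%N ->
  gcd_zeta m = Series (fun k => if (p %| k.+1)%N then 0 else gcd_weight m k.+1)
               + Rpower (INR p) (r2 + IZR P) * gcd_zeta m.
Proof.
move=> p_prime pm_coprime m_gt0; rewrite /gcd_zeta.
rewrite {1}(Series_split_multiples _ p (prime_gt0 p_prime) (ex_series_Rabs_gcd_weight m m_gt0)).
by congr (_ + _); rewrite -Series_scal_l; apply: Series_ext => j; rewrite gcd_weight_mul_coprime.
Qed.

Lemma gcd_zeta_powS p m v : prime p -> (0 < m)%N ->
  gcd_zeta (p ^ v.+1 * m) = Series (fun k => if (p %| k.+1)%N then 0 else gcd_weight m k.+1)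
                            + Rpower (INR p) r2 * gcd_zeta (p ^ v * m).
Proof.
move=> p_prime m_gt0; rewrite /gcd_zeta.
have pm_gt0 : (0 < p ^ v.+1 * m)%N by rewrite muln_gt0 m_gt0 expn_gt0 prime_gt0.
rewrite (Series_split_multiples _ p (prime_gt0 p_prime) (ex_series_Rabs_gcd_weight _ pm_gt0)).
congr (_ + _).
  by apply: Series_ext => k; case: ifP => [//|/negbT p_ndvd]; rewrite gcd_weight_pow_ndvd.
by rewrite -Series_scal_l; apply: Series_ext => j; rewrite gcd_weight_mul_powS.
Qed.

Lemma euler_factorS p v : (0 < p)%N ->
  euler_factor p v.+1 =
  (1 - Rpower (INR p) r2 * powerRZ (INR p) P) + Rpower (INR p) r2 * euler_factor p v.
Proof.
move=> p_gt0; rewrite /euler_factor -[iota 1 v.+1]/(1%N :: iota (1 + 1) v) iotaDl /=.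
have shift : [seq Rpower (INR p) (INR k * r2) | k <- [seq (1 + i)%N | i <- iota 1 v]] =
             [seq Rpower (INR p) r2 * Rpower (INR p) (INR k * r2) | k <- iota 1 v].
  rewrite -map_comp; apply: eq_map => k.
  by rewrite /ssrfun.comp add1n S_INR -Rpower_plus; congr Rpower; ring.
by rewrite shift foldr_Rplus_mull Rmult_1_l; ring.
Qed.

(* Removing the multiples of [p] leaves the same series for every [p ^ v * m],
   which turns [gcd_zeta (p ^ v * m)] into a linear recursion in [v]. *)
Lemma gcd_zeta_pow p m v : prime p -> coprime p m -> (0 < m)%N ->
  gcd_zeta (p ^ v * m) = euler_factor p v * gcd_zeta m.
Proof.
move=> p_prime pm_coprime m_gt0.
have := gcd_zeta_coprime p m p_prime pm_coprime m_gt0.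
rewrite Rpower_plus -powerRZ_Rpower; last exact/INR_gt0/prime_gt0.
set p_free := Series _ => zeta_m.
elim: v => [|v IH]; first by rewrite expn0 mul1n /euler_factor /=; ring.
rewrite gcd_zeta_powS // IH euler_factorS ?prime_gt0 // -/p_free.
have -> : p_free = (1 - Rpower (INR p) r2 * powerRZ (INR p) P) * gcd_zeta m by lra.
ring.
Qed.

Lemma gcd_zeta_1 : gcd_zeta 1 = zeta (- r2 - IZR P).
Proof.
rewrite /gcd_zeta /zeta; apply: Series_ext => k.
rewrite /gcd_weight gcdn1 /= powerRZ_R1 /Rdiv Rinv_1 Rmult_1_r.
by congr Rpower; ring.
Qed.

Lemma euler_prod_pdiv d m : (1 < d)%N -> coprime (pdiv d) m ->
  d = (m * pdiv d ^ logn (pdiv d) d)%N ->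
  euler_prod d r2 P = euler_factor (pdiv d) (logn (pdiv d) d) * euler_prod m r2 P.
Proof.
move=> d_gt1 pm_coprime d_eq; have p_prime := pdiv_prime d_gt1.
have m_gt0 : (0 < m)%N by case: m d_eq {pm_coprime} => [|//]; rewrite mul0n; lia.
rewrite /euler_prod (primes_mul_pdiv_pow d m) //=; congr (_ * _).
congr (foldr Rmult 1); apply/eq_in_map => q; rewrite mem_primes => /and3P [_ _ q_dvd].
rewrite {1}d_eq logn_mul_pow_prime //.
by apply/eqP => q_eq; move: pm_coprime; rewrite prime_coprime // -q_eq q_dvd.
Qed.

Lemma gcd_zeta_euler_prod d : (0 < d)%N -> gcd_zeta d = zeta (- r2 - IZR P) * euler_prod d r2 P.
Proof.
elim/ltn_ind: d => d IH d_gt0.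
have [->|d_neq1] := eqVneq d 1%N; first by rewrite gcd_zeta_1 /euler_prod /=; ring.
have d_gt1 : (1 < d)%N by lia.
have p_prime := pdiv_prime d_gt1.
have [m pm_coprime d_eq] := pfactor_coprime p_prime d_gt0.
have m_gt0 : (0 < m)%N by case: m d_eq {pm_coprime} => [|//]; rewrite mul0n; lia.
have m_lt : (m < d)%N.
  rewrite [X in (_ < X)%N]d_eq -[X in (X < _)%N]muln1 ltn_mul2l m_gt0 /=.
  by rewrite -(expn0 (pdiv d)) ltn_exp2l ?prime_gt1 // logn_gt0 mem_primes p_prime pdiv_dvd; lia.
by rewrite {1}d_eq mulnC gcd_zeta_pow // IH // (euler_prod_pdiv d m) //; ring.
Qed.

End GcdZeta.

(** * Residue classes modulo d *)

Definition residue_coef (n : Z) (d : nat) (P : Z) (c' : nat) : R :=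
  if (gcdn c' d %| Z.abs_nat n)%N then
    powerRZ (INR d) P / powerRZ (INR (gcdn c' d)) P *
    sumZ (fun m => powerRZ (IZR m + u_cd n c' d) P)
  else 0.

(* [c = j d + c'] has the same gcd with [d] as [c'], and a solution for [c']
   shifts to one for [c] with the same [b]. *)
Lemma weighted_sumZ_inner_term_residue (n : Z) (d : nat) (P : Z) (r2 : R) (k : nat) :
  (0 < d)%N -> (P <= -2)%Z ->
  Rpower (INR k.+1) r2 * sumZ (inner_term n d k.+1 P) =
  Rpower (INR k.+1) (r2 + IZR P) * residue_coef n d P (k %% d).+1.
Proof.
move=> d_gt0 P_le; set c' := (k %% d).+1; set j := (k %/ d)%N.
have k_eq : k.+1 = (j * d + c')%N by rewrite /c' /j {1}(divn_eq k d) addnS.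
have gcd_eq : gcdn k.+1 d = gcdn c' d by rewrite k_eq gcdnC gcdnMDl gcdnC.
have gcd_Z : Z.of_nat (gcdn c' d) = Z.gcd (Z.of_nat k.+1) (Z.of_nat d).
  by rewrite -gcd_eq Nat2Z_gcdn.
rewrite /residue_coef; case: ifP => [/dvdn_abs_nat|/negbT/negP ndvd]; last first.
  rewrite sumZ_inner_term_eq0 //; first ring.
  by rewrite -gcd_Z => /dvdn_abs_nat.
rewrite Nat2Z_gcdn => /solvable_iff_gcd_divide /bstar_solves [a' sol'].
rewrite (weighted_sumZ_inner_term n d k.+1 P (a' + bstar n c' d * Z.of_nat j) (bstar n c' d)) //.
  by rewrite gcd_eq.
by rewrite k_eq; lia.
Qed.

Lemma is_series_residue_class (x s : R) (d c' : nat) : (0 < c' <= d)%N -> s <= -2 ->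
  is_series (fun k => if (k %% d).+1 == c' then Rpower (INR k.+1) s * x else 0)
            (x * (Rpower (INR d) s * hurwitz_zeta (- s) (INR c' / INR d))).
Proof.
move=> /andP [c'_gt0 c'_le] s_le.
set u := fun k => _.
have d_pos : 0 < INR d by apply: INR_gt0; lia.
have u_sparse N i : (i < d)%N ->
    u (d * N + i)%N = if i == c'.-1 then Rpower (INR (d * N + c')) s * x else 0.
  move=> i_lt; rewrite /u mulnC modnMDl modn_small //.
  case: (i =P c'.-1) => [->|i_ne]; first by rewrite prednK // eqxx -addnS prednK.
  by case: eqP => //; lia.
have u_abs : ex_series (fun k => Rabs (u k)).
  apply: (ex_series_Rabs_le _ (fun k => Rabs x * Rpower (INR k.+1) s)).
    move=> k; rewrite /u; case: eqP => _; last first.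
      by rewrite Rabs_R0; apply: Rmult_le_pos; [apply: Rabs_pos | apply/Rlt_le/exp_pos].
    rewrite Rabs_mult (Rabs_pos_eq (Rpower _ _)); last exact/Rlt_le/exp_pos.
    by rewrite Rmult_comm; lra.
  by apply: ex_series_scal_l; apply: ex_series_Rpower_le_m2.
have u_ex := ex_series_Rabs _ u_abs.
have c'_pos : 0 < INR c' by exact: INR_gt0.
suff -> : x * (Rpower (INR d) s * hurwitz_zeta (- s) (INR c' / INR d)) = Series u.
  exact: Series_correct.
rewrite (Series_sparse _ _ d c'.-1 _ u_sparse u_ex); last lia.
rewrite /hurwitz_zeta -!Series_scal_l; apply: Series_ext => N.
have frac_pos : 0 < INR N + INR c' / INR d.
  by have := pos_INR N; have := Rdiv_lt_0_compat _ _ c'_pos d_pos; lra.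
have -> : INR (d * N + c') = INR d * (INR N + INR c' / INR d).
  by rewrite plus_INR mult_INR; field; lra.
by rewrite -Rpower_mult_distr // Ropp_involutive; ring.
Qed.

Lemma S_sum_div (n : Z) (r2 : R) (d : nat) (P : Z) :
  n <> 0%Z -> (0 < d)%N -> (P <= -2)%Z -> r2 + IZR P <= -2 ->
  (d %| Z.abs_nat n)%N -> S_sum n r2 d P = rhs_div n r2 d P.
Proof.
move=> n_neq0 d_gt0 P_le s_le /dvdn_abs_nat [q n_eq].
set t_sum := sumZ (fun t => powerRZ (IZR t) P).
have main_eq k : Rpower (INR k.+1) r2 * sumZ (inner_term n d k.+1 P) =
                 (powerRZ (INR d) P * t_sum) * gcd_weight r2 P d k.+1.
  rewrite (weighted_sumZ_inner_term n d k.+1 P q 0) //; last by rewrite n_eq; ring.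
  rewrite (sumZ_ext _ (fun t => powerRZ (IZR t) P)); last first.
    by move=> t; rewrite Rmult_0_l /Rdiv Rmult_0_l Rplus_0_r.
  by rewrite /gcd_weight /t_sum gcdnC /Rdiv; ring.
have weight_ex := ex_series_Rabs _ (ex_series_Rabs_gcd_weight r2 P P_le s_le d d_gt0).
rewrite S_sum_eq //; last first.
  by apply: (ex_series_ext _ _ (fun k => esym (main_eq k))); apply: ex_series_scal_l.
rewrite (Series_ext _ _ main_eq) Series_scal_l -/(gcd_zeta r2 P d) gcd_zeta_euler_prod //.
by rewrite /t_sum sumZ_powerRZ // /rhs_div; ring.
Qed.

(* Valid whether or not [d] divides [n]. *)
Lemma S_sum_residues (n : Z) (r2 : R) (d : nat) (P : Z) :
  n <> 0%Z -> (0 < d)%N -> (P <= -2)%Z -> r2 + IZR P <= -2 ->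
  S_sum n r2 d P = rhs_ndiv n r2 d P.
Proof.
move=> n_neq0 d_gt0 P_le s_le; set s := r2 + IZR P.
pose h c' k := if (k %% d).+1 == c' then Rpower (INR k.+1) s * residue_coef n d P c' else 0.
have main_eq k : Rpower (INR k.+1) r2 * sumZ (inner_term n d k.+1 P) =
                 foldr Rplus 0 [seq h c' k | c' <- iota 1 d].
  rewrite weighted_sumZ_inner_term_residue // foldr_Rplus_indicator ifT //.
  by have := ltn_pmod k d_gt0; lia.
have h_series c' : c' \in iota 1 d ->
    is_series (h c') (residue_coef n d P c' *
                      (Rpower (INR d) s * hurwitz_zeta (- s) (INR c' / INR d))).
  by rewrite mem_iota => c'_range; apply: is_series_residue_class; [lia | exact: s_le].
have main_series := is_series_ext _ _ _ (fun k => esym (main_eq k))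
  (is_series_foldr (iota 1 d) h (fun c' c'_in => ex_intro _ _ (h_series c' c'_in))).
rewrite S_sum_eq //; last by eexists; exact: main_series.
rewrite (is_series_unique _ _ main_series) /rhs_ndiv.
rewrite foldr_Rplus_filter -foldr_Rplus_mull Rplus_comm; congr (_ + _).
congr (foldr Rplus 0); apply/eq_in_map => c' c'_in.
rewrite (is_series_unique _ _ (h_series c' c'_in)) /residue_coef.
have -> : Rpower (INR d) (r2 + 2 * IZR P) = Rpower (INR d) s * powerRZ (INR d) P.
  by rewrite powerRZ_Rpower -?Rpower_plus /s; [congr Rpower; ring | exact: INR_gt0].
have -> : - s = - r2 - IZR P by rewrite /s; ring.
by case: ifP => _; rewrite /Rdiv; ring.
Qed.

Theorem lemma3p1 :
  forall r2 : R, exists P0 : Z,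
  forall (n : Z) (d : nat) (P : Z),
    n <> 0%Z -> (0 < d)%N -> (P <= P0)%Z ->
    ((d %| Z.abs_nat n)%N -> S_sum n r2 d P = rhs_div n r2 d P) /\
    (~~ (d %| Z.abs_nat n)%N -> S_sum n r2 d P = rhs_ndiv n r2 d P).
Proof.
move=> r2; exists (Z.min (-2) (-2 - up r2)) => n d P n_neq0 d_gt0 P_le.
have P_le2 : (P <= -2)%Z by lia.
have s_le : r2 + IZR P <= -2.
  have [up_gt _] := archimed r2.
  have : IZR P <= IZR (-2 - up r2) by apply: IZR_le; lia.
  by rewrite minus_IZR; lra.
split=> [d_dvd|_]; [exact: S_sum_div | exact: S_sum_residues].
Qed.
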